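(* The reductions $\to_{ym}$, $\to_{yeAY}$ and $\to_{yeYN}$ are deterministic, and $\to_{ygcv}$ is diamond.
   Context: Terms: $t ::= x \mid \lambda x.t \mid t\,u \mid t[x\backslash u]$ ($t[x\backslash u]$ an explicit substitution binding $x$ in $t$; terms up to $\alpha$). Values $v ::= \lambda x.t$. Substitution contexts $S ::= \langle\cdot\rangle\mid S[x\backslash u]$. For a class of contexts $K$, $K\langle\langle t\rangle\rangle$ is plugging without capture of free variables of $t$. Root rules: $S\langle\lambda x.t\rangle u\mapsto_m S\langle t[x\backslash u]\rangle$; $K\langle\langle x\rangle\rangle[x\backslash u]\mapsto_{e_K} K\langle\langle u\rangle\rangle[x\backslash u]$ ($K$ ranging over the class of contexts); $t[x\backslash S\langle v\rangle]\mapsto_{gcv} S\langle t\rangle$ if $x\notin\mathrm{fv}(t)$. Answers $a ::= v\mid a[x\backslash a']$; name contexts $N ::= \langle\cdot\rangle\mid N t\mid N[x\backslash t]$; auxiliary contexts $A ::= \langle\cdot\rangle\mid a[x\backslash A]\mid A[x\backslash t]$; silly contexts $Y ::= A\langle N\rangle$. $\to_{ym} := Y\langle\mapsto_m\rangle$; $\to_{yeAY} := A\langle\mapsto_{e_Y}\rangle$; $\to_{yeYN} := Y\langle\mapsto_{e_N}\rangle$; $\to_{ygcv}:=Y\langle\mapsto_{gcv}\rangle$. Deterministic: each term has at most one reduct. Diamond: if $u_1\leftarrow t\to u_2$ then $u_1=u_2$ or there is $s$ with $u_1\to s\leftarrow u_2$. *)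

(* Terms with explicit substitutions in de Bruijn notation
   (terms up to alpha-equivalence = syntactic equality of de Bruijn terms). *)
From Stdlib Require Import Arith.

(* t ::= x | \x.t | t u | t[x\u].
   ES t u represents t[x\u]; x is index 0 in t (ES binds in its body t). *)
Inductive term : Type :=
| Var : nat -> term
| Lam : term -> term
| App : term -> term -> term
| ES  : term -> term -> term.

Fixpoint shift (d c : nat) (t : term) : term :=
  match t with
  | Var n => if Nat.leb c n then Var (n + d) else Var n
  | Lam b => Lam (shift d (S c) b)
  | App t1 t2 => App (shift d c t1) (shift d c t2)
  | ES t1 t2 => ES (shift d (S c) t1) (shift d c t2)
  end.

Inductive ctx : Type :=
| Hole : ctx
| CLam : ctx -> ctx
| CAppL : ctx -> term -> ctx
| CAppR : term -> ctx -> ctx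
| CESL : ctx -> term -> ctx
| CESR : term -> ctx -> ctx.

Fixpoint plug (c : ctx) (s : term) : term :=
  match c with
  | Hole => s
  | CLam c' => Lam (plug c' s)
  | CAppL c' t => App (plug c' s) t
  | CAppR t c' => App t (plug c' s)
  | CESL c' t => ES (plug c' s) t
  | CESR t c' => ES t (plug c' s)
  end.

Fixpoint depth (c : ctx) : nat :=
  match c with
  | Hole => 0
  | CLam c' => S (depth c')
  | CAppL c' _ => depth c'
  | CAppR _ c' => depth c'
  | CESL c' _ => S (depth c')
  | CESR _ c' => depth c'
  end.

Fixpoint ccomp (c1 c2 : ctx) : ctx :=
  match c1 with
  | Hole => c2
  | CLam c' => CLam (ccomp c' c2)
  | CAppL c' t => CAppL (ccomp c' c2) t
  | CAppR t c' => CAppR t (ccomp c' c2)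
  | CESL c' t => CESL (ccomp c' c2) t
  | CESR t c' => CESR t (ccomp c' c2)
  end.

Definition is_value (v : term) : Prop := exists b, v = Lam b.

Inductive is_S : ctx -> Prop :=
| S_hole : is_S Hole
| S_es : forall s u, is_S s -> is_S (CESL s u).

Inductive is_answer : term -> Prop :=
| ans_val : forall b, is_answer (Lam b)
| ans_es : forall a a', is_answer a -> is_answer a' -> is_answer (ES a a').

Inductive is_N : ctx -> Prop :=
| N_hole : is_N Hole
| N_app : forall n t, is_N n -> is_N (CAppL n t)
| N_es : forall n t, is_N n -> is_N (CESL n t).

Inductive is_A : ctx -> Prop :=
| A_hole : is_A Hole
| A_arg : forall a c, is_answer a -> is_A c -> is_A (CESR a c)
| A_es : forall c t, is_A c -> is_A (CESL c t).

Definition is_Y (c : ctx) : Prop :=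
  exists a n, is_A a /\ is_N n /\ c = ccomp a n.

(* S<\x.t> u |->m S<t[x\u]>  (u placed under S without capture) *)
Definition root_m (r r' : term) : Prop :=
  exists s b u, is_S s /\
    r = App (plug s (Lam b)) u /\
    r' = plug s (ES b (shift (depth s) 0 u)).

(* K<<x>>[x\u] |->eK K<<u>>[x\u] *)
Definition root_e (K : ctx -> Prop) (r r' : term) : Prop :=
  exists k u, K k /\
    r = ES (plug k (Var (depth k))) u /\
    r' = ES (plug k (shift (S (depth k)) 0 u)) u.

(* t[x\S<v>] |->gcv S<t>  if x notin fv(t): t is written as shift 1 0 t0 *)
Definition root_gcv (r r' : term) : Prop :=
  exists t0 s v, is_S s /\ is_value v /\
    r = ES (shift 1 0 t0) (plug s v) /\
    r' = plug s (shift (depth s) 0 t0).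

Definition closure (C : ctx -> Prop) (R : term -> term -> Prop) (t t' : term) : Prop :=
  exists c r r', C c /\ R r r' /\ t = plug c r /\ t' = plug c r'.

Definition ym := closure is_Y root_m.
Definition yeAY := closure is_A (root_e is_Y).
Definition yeYN := closure is_Y (root_e is_N).
Definition ygcv := closure is_Y root_gcv.

Definition deterministic (R : term -> term -> Prop) : Prop :=
  forall t u1 u2, R t u1 -> R t u2 -> u1 = u2.

Definition diamond (R : term -> term -> Prop) : Prop :=
  forall t u1 u2, R t u1 -> R t u2 ->
    u1 = u2 \/ exists s, R u1 s /\ R u2 s.

(* Each of the four reductions closes a root rule under one of three context
   grammars, and a one-step reduction of such a closure splits into a root
   step, a step in the body [t] or in the argument [u] of [t[x\u]], or a step
   in the function position of an application.  Determinism then amounts to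
   the absence of overlaps: redexes are never answers, an m-redex [S<v> u] has
   no redex at an N-position of [S<v>], and an e-redex [K<<x>>[x\u]] has no
   e-redex at a Y-position of [K<<x>>], since that redex would have to bind
   the very occurrence of [x].
   For gcv, a redex [t[x\S<v>]] overlaps only with steps inside [t], which
   commute with the root step because [x] does not occur in [t], and with steps
   inside the answer [S<v>]: these produce again a value [S'<v'>] under a
   substitution context, and the same step turns [S<t>] into [S'<t>]. *)

From Stdlib Require Import Arith Lia.

(** * De Bruijn shifting *)

Ltac solve_index :=
  repeat (simpl; match goal with
                 | |- context [Nat.leb ?a ?b] => destruct (Nat.leb_spec a b)
                 end);
  try (f_equal; lia); try lia.

Ltac destruct_leb_in H :=
  repeat match type of H with
         | context [Nat.leb ?a ?b] => destruct (Nat.leb_spec a b)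
         | context [match ?n with 0 => false | S _ => _ end] => destruct n
         end.

Lemma shift_shift_comm t d k j c : j <= c ->
  shift d (c + k) (shift k j t) = shift k j (shift d c t).
Proof.
  revert d k j c; induction t; intros d k j c Hjc; simpl.
  - solve_index.
  - f_equal. apply (IHt d k (S j) (S c)). lia.
  - f_equal; auto.
  - f_equal; [apply (IHt1 d k (S j) (S c)); lia | auto].
Qed.

Lemma shift_shift t d k j c : j <= c -> c <= j + k ->
  shift d c (shift k j t) = shift (d + k) j t.
Proof.
  revert d k j c; induction t; intros d k j c H1 H2; simpl.
  - solve_index.
  - f_equal. apply IHt; lia.
  - f_equal; auto.
  - f_equal; [apply IHt1; lia | auto].
Qed.

Lemma shift_inj d c a b : shift d c a = shift d c b -> a = b.
Proof.
  revert b c; induction a; destruct b; intros c E; simpl in E; destruct_leb_in E;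
    try discriminate; injection E; intros; subst; f_equal; eauto; lia.
Qed.

Lemma shift_eq_shift1 a t d c k : k <= c -> shift d (S c) a = shift 1 k t ->
  exists a0, a = shift 1 k a0 /\ t = shift d c a0.
Proof.
  revert t c k; induction a; intros t c k Hk E; destruct t; simpl in E; destruct_leb_in E;
    try discriminate; injection E; intros; subst.
  all: try solve
    [ lia
    | lazymatch goal with
      | |- exists _, Var ?x = _ /\ _ =>
          first [ exists (Var x); split; solve [solve_index]
                | exists (Var (x - 1)); split; solve [solve_index] ]
      end ].
  - destruct (IHa t (S c) (S k)) as (a0 & -> & ->); [lia | assumption |].
    exists (Lam a0); auto.
  - destruct (IHa1 t1 c k) as (a0 & -> & ->); auto.
    destruct (IHa2 t2 c k) as (b0 & -> & ->); auto.
    exists (App a0 b0); auto.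
  - destruct (IHa1 t1 (S c) (S k)) as (a0 & -> & ->); [lia | assumption |].
    destruct (IHa2 t2 c k) as (b0 & -> & ->); auto.
    exists (ES a0 b0); auto.
Qed.

Fixpoint shiftc (d c : nat) (k : ctx) : ctx :=
  match k with
  | Hole => Hole
  | CLam k' => CLam (shiftc d (S c) k')
  | CAppL k' t => CAppL (shiftc d c k') (shift d c t)
  | CAppR t k' => CAppR (shift d c t) (shiftc d c k')
  | CESL k' t => CESL (shiftc d (S c) k') (shift d c t)
  | CESR t k' => CESR (shift d (S c) t) (shiftc d c k')
  end.

Lemma shift_plug k d c x :
  shift d c (plug k x) = plug (shiftc d c k) (shift d (c + depth k) x).
Proof.
  revert c; induction k; intros c; simpl; rewrite ?IHk, ?Nat.add_0_r, ?Nat.add_succ_r;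
    reflexivity.
Qed.

Lemma depth_shiftc k d c : depth (shiftc d c k) = depth k.
Proof. revert c; induction k; intros; simpl; auto. Qed.

Lemma plug_ccomp a c t : plug (ccomp a c) t = plug a (plug c t).
Proof. induction a; simpl; f_equal; auto. Qed.

Lemma depth_ccomp a c : depth (ccomp a c) = depth a + depth c.
Proof. induction a; simpl; auto. Qed.

Lemma is_value_shift v d c : is_value v -> is_value (shift d c v).
Proof. intros [b ->]; simpl; eexists; eauto. Qed.

Lemma is_S_shiftc s d c : is_S s -> is_S (shiftc d c s).
Proof. intros H; revert c; induction H; intros; simpl; constructor; auto. Qed.

Lemma is_S_ccomp s s' : is_S s -> is_S s' -> is_S (ccomp s s').
Proof. intros H; induction H; intros; simpl; try constructor; auto. Qed.

Lemma is_answer_shift a d c : is_answer (shift d c a) <-> is_answer a.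
Proof.
  split.
  - revert c; induction a; intros c H; simpl in H.
    + destruct (Nat.leb c n); inversion H.
    + constructor.
    + inversion H.
    + inversion H; subst; constructor; eauto.
  - intros H; revert c; induction H; intros; simpl; constructor; auto.
Qed.

Lemma is_answer_plug_S s x y : is_S s ->
  is_answer (plug s x) -> is_answer y -> is_answer (plug s y).
Proof.
  intros H; induction H; simpl; intros Hx Hy; auto.
  inversion Hx; subst; constructor; auto.
Qed.

Lemma plug_S_value_inj s s' v v' : is_S s -> is_S s' -> is_value v -> is_value v' ->
  plug s v = plug s' v' -> s = s' /\ v = v'.
Proof.
  intros H; revert s'; induction H; intros s' H' [b ->] [b' ->] E;
    inversion H'; subst; simpl in E; try discriminate.
  - auto.
  - injection E; intros; subst.
    destruct (IHis_S s0) as [-> ->]; auto; eexists; eauto.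
Qed.

Lemma shift_eq_plug_S s w v d c : is_S s -> is_value v -> shift d c w = plug s v ->
  exists s0 v0, is_S s0 /\ is_value v0 /\ s = shiftc d c s0 /\ w = plug s0 v0 /\
                v = shift d (c + depth s0) v0.
Proof.
  intros H; revert w c; induction H; intros w c Hv E; simpl in E.
  - destruct Hv as [b ->].
    destruct w; simpl in E; try destruct (Nat.leb c n); try discriminate.
    exists Hole, (Lam w); simpl; rewrite Nat.add_0_r.
    repeat split; auto; [constructor | eexists; eauto].
  - destruct w; simpl in E; try destruct (Nat.leb c n); try discriminate.
    injection E; intros E2 E1.
    destruct (IHis_S w1 (S c) Hv E1) as (s0 & v0 & Hs0 & Hv0 & -> & -> & ->).
    exists (CESL s0 w2), v0; simpl.
    repeat split; subst; auto; [constructor; auto | f_equal; lia].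
Qed.

(** * Context classes and one-step closures *)

(* The grammars of A-, N- and Y-contexts, with Y = A<N> unfolded: a Y-context
   may pass under [a[x\_]] until it enters the function position of an
   application, and is an N-context from there on. *)
Inductive cclass : Type := cA | cY | cN.

Inductive in_class : cclass -> ctx -> Prop :=
| in_hole k : in_class k Hole
| in_esl k c t : in_class k c -> in_class k (CESL c t)
| in_esr k a c : k <> cN -> is_answer a -> in_class k c -> in_class k (CESR a c)
| in_appl k c t : k <> cA -> in_class cN c -> in_class k (CAppL c t).

Inductive step (R : term -> term -> Prop) : cclass -> term -> term -> Prop :=
| step_root k r r' : R r r' -> step R k r r'
| step_esl k t t' u : step R k t t' -> step R k (ES t u) (ES t' u)
| step_esr k a t t' : k <> cN -> is_answer a -> step R k t t' -> step R k (ES a t) (ES a t')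
| step_appl k t t' u : k <> cA -> step R cN t t' -> step R k (App t u) (App t' u).

Lemma step_plug R k c r r' : in_class k c -> R r r' -> step R k (plug c r) (plug c r').
Proof.
  intros H Hr; induction H; simpl;
    [apply step_root | apply step_esl | apply step_esr | apply step_appl]; auto.
Qed.

Lemma step_inv_plug R k t t' : step R k t t' ->
  exists c r r', in_class k c /\ R r r' /\ t = plug c r /\ t' = plug c r'.
Proof.
  intros H; induction H as [k r r' Hr | k t t' u _ IH | k a t t' Hk Ha _ IH
                           | k t t' u Hk _ IH].
  - exists Hole, r, r'; repeat split; auto; constructor.
  - destruct IH as (c & r & r' & Hc & Hr & -> & ->).
    exists (CESL c u), r, r'; repeat split; auto; constructor; auto.
  - destruct IH as (c & r & r' & Hc & Hr & -> & ->).
    exists (CESR a c), r, r'; repeat split; auto; constructor; auto.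
  - destruct IH as (c & r & r' & Hc & Hr & -> & ->).
    exists (CAppL c u), r, r'; repeat split; auto; constructor; auto.
Qed.

Lemma closure_step C R k t t' : (forall c, C c -> in_class k c) ->
  closure C R t t' -> step R k t t'.
Proof. intros HC (c & r & r' & Hc & Hr & -> & ->); apply step_plug; auto. Qed.

Lemma step_closure C R k t t' : (forall c, in_class k c -> C c) ->
  step R k t t' -> closure C R t t'.
Proof.
  intros HC H; destruct (step_inv_plug R k t t' H) as (c & r & r' & Hc & Hr & -> & ->).
  exists c, r, r'; auto.
Qed.

Lemma in_class_Y k c : in_class k c -> in_class cY c.
Proof. intros H; induction H; constructor; auto; discriminate. Qed.

Lemma step_N_lift R k t t' : k <> cA -> step R cN t t' -> step R k t t'.
Proof.
  intros Hk H; destruct (step_inv_plug R cN t t' H) as (c & r & r' & Hc & Hr & -> & ->).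
  apply step_plug; auto.
  destruct k; [congruence | apply (in_class_Y cN) | ]; auto.
Qed.

Lemma is_A_in_class c : is_A c -> in_class cA c.
Proof. intros H; induction H; constructor; auto; discriminate. Qed.

Lemma is_N_in_class c : is_N c -> in_class cN c.
Proof. intros H; induction H; constructor; auto; discriminate. Qed.

Lemma in_class_N_is_N c : in_class cN c -> is_N c.
Proof.
  intros H; remember cN as k; induction H; subst; try constructor; auto; congruence.
Qed.

Lemma in_class_ccomp_A a c : in_class cA a -> in_class cY c -> in_class cY (ccomp a c).
Proof.
  intros H; remember cA as k; induction H; intros; subst; simpl;
    try constructor; auto; congruence.
Qed.

Lemma in_class_ccomp_N k c n : k <> cA -> in_class k c -> in_class cN n ->
  in_class k (ccomp c n).
Proof.
  intros Hk H; induction H; intros Hn; simpl; try constructor; auto.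
  - destruct k; [congruence | apply (in_class_Y cN) |]; auto.
  - apply IHin_class; auto; discriminate.
Qed.

Lemma is_Y_iff_in_class c : is_Y c <-> in_class cY c.
Proof.
  split.
  - intros (a & n & Ha & Hn & ->).
    apply in_class_ccomp_A; [apply is_A_in_class | apply (in_class_Y cN), is_N_in_class]; auto.
  - intros H; remember cY as k; induction H; subst.
    + exists Hole, Hole; repeat split; constructor.
    + destruct IHin_class as (a & n & Ha & Hn & ->); auto.
      exists (CESL a t), n; repeat split; auto; constructor; auto.
    + destruct IHin_class as (a' & n & Ha & Hn & ->); auto.
      exists (CESR a a'), n; repeat split; auto; constructor; auto.
    + exists Hole, (CAppL c t); repeat split; constructor; apply in_class_N_is_N; auto.
Qed.

(** * Determinism *)

Lemma plug_var_not_answer k c i : in_class k c -> ~ is_answer (plug c (Var i)).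
Proof. intros H; induction H; simpl; intro Ha; inversion Ha; subst; auto. Qed.

Lemma plug_var_inj k c c' i j : in_class k c -> in_class k c' ->
  plug c (Var i) = plug c' (Var j) -> c = c' /\ i = j.
Proof.
  intros H; revert c' i j; induction H; intros c' i j H' E;
    destruct c'; simpl in E; try discriminate; inversion H'; subst;
    injection E; intros; subst.
  all: try solve [ auto
                 | exfalso; eapply plug_var_not_answer; [| eassumption]; eassumption
                 | destruct (IHin_class c' i j) as [-> ->]; auto ].
Qed.

Section Determinism.

Variable R : term -> term -> Prop.
Hypothesis root_det : forall r r1 r2, R r r1 -> R r r2 -> r1 = r2.
Hypothesis root_not_answer : forall r r', R r r' -> ~ is_answer r.
Hypothesis root_ES_not_answer_body : forall a u r', R (ES a u) r' -> ~ is_answer a.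
Hypothesis root_App_no_N_step : forall t u r' t', R (App t u) r' -> ~ step R cN t t'.

Lemma step_not_answer k t t' : step R k t t' -> ~ is_answer t.
Proof.
  intros H; induction H; intro Ha;
    [eapply root_not_answer; eauto | inversion Ha; subst; auto ..].
Qed.

Lemma step_det k :
  (forall t u r' t', R (ES t u) r' -> ~ step R k t t') ->
  forall t t1 t2, step R k t t1 -> step R k t t2 -> t1 = t2.
Proof.
  intros no_body_step t t1 t2 H1; revert no_body_step t2.
  induction H1 as [k r r1 Hr | k t t1 u H1 IH | k a t t1 Hk Ha H1 IH
                  | k t t1 u Hk H1 IH];
    intros no_body_step t2 H2; inversion H2; subst.
  all: try solve [ eauto
                 | exfalso; eapply no_body_step; eauto
                 | exfalso; eapply root_ES_not_answer_body; eauto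
                 | exfalso; eapply root_App_no_N_step; eauto
                 | exfalso; eapply step_not_answer; [| eassumption]; eassumption ].
  all: f_equal; apply IH; auto.
  intros t0 u0 r' t0' Hr Hs; apply (no_body_step t0 u0 r' t0' Hr), step_N_lift; auto.
Qed.

Lemma closure_det C k : (forall c, C c -> in_class k c) ->
  (forall t u r' t', R (ES t u) r' -> ~ step R k t t') ->
  deterministic (closure C R).
Proof.
  intros HC no_body_step t t1 t2 H1 H2.
  apply (step_det k no_body_step t); apply (closure_step C); auto.
Qed.

End Determinism.

Lemma root_m_det r r1 r2 : root_m r r1 -> root_m r r2 -> r1 = r2.
Proof.
  intros (s & b & u & Hs & -> & ->) (s' & b' & u' & Hs' & E & ->).
  injection E; intros; subst.
  destruct (plug_S_value_inj s s' (Lam b) (Lam b')) as [-> E']; auto;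
    try (eexists; eauto).
  injection E'; intros; subst; auto.
Qed.

Lemma plug_S_lam_no_N_step s b t : is_S s -> ~ step root_m cN (plug s (Lam b)) t.
Proof.
  intros Hs; revert t; induction Hs; intros t H; simpl in H; inversion H; subst;
    try solve [congruence | eapply IHHs; eauto].
  all: match goal with Hm : root_m _ _ |- _ =>
         destruct Hm as (s0 & b0 & u0 & _ & Er & _); discriminate Er end.
Qed.

Lemma ym_det : deterministic ym.
Proof.
  apply (closure_det root_m root_m_det) with (k := cY).
  - intros r r' (s & b & u & Hs & -> & ->) Ha; inversion Ha.
  - intros a u r' (s & b & u0 & Hs & E & ->); discriminate.
  - intros t u r' t' (s & b & u0 & Hs & E & ->); injection E; intros; subst.
    apply plug_S_lam_no_N_step; auto.
  - apply is_Y_iff_in_class.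
  - intros t u r' t' (s & b & u0 & Hs & E & ->); discriminate.
Qed.

Section RootE.

Variable K : ctx -> Prop.
Hypothesis K_Y : forall c, K c -> in_class cY c.

Lemma root_e_det r r1 r2 : root_e K r r1 -> root_e K r r2 -> r1 = r2.
Proof.
  intros (k & u & Hk & -> & ->) (k' & u' & Hk' & E & ->).
  injection E; intros; subst.
  destruct (plug_var_inj cY k k' (depth k) (depth k')) as [-> _]; auto.
Qed.

Lemma root_e_not_answer r r' : root_e K r r' -> ~ is_answer r.
Proof.
  intros (k & u & Hk & -> & ->) Ha; inversion Ha; subst.
  eapply plug_var_not_answer; eauto.
Qed.

Lemma root_e_ES_not_answer_body a u r' : root_e K (ES a u) r' -> ~ is_answer a.
Proof.
  intros (k & u0 & Hk & E & ->) Ha; injection E; intros; subst.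
  eapply plug_var_not_answer; eauto.
Qed.

(* The variable of an e-redex is bound by the redex's own substitution, hence
   not by an e-redex nested inside the body. *)
Lemma root_e_body_no_step K' k t u r' t' :
  (forall c k' u', in_class k c -> K' k' -> in_class cY (ccomp c (CESL k' u'))) ->
  root_e K (ES t u) r' -> ~ step (root_e K') k t t'.
Proof.
  intros HK' (k0 & u0 & Hk0 & E & ->) Hst; injection E; intros; subst.
  destruct (step_inv_plug _ _ _ _ Hst)
    as (c & r & r'' & Hc & (k' & u' & Hk' & -> & ->) & Et & _).
  assert (Ek : plug k0 (Var (depth k0)) = plug (ccomp c (CESL k' u')) (Var (depth k'))).
  { rewrite Et, plug_ccomp; reflexivity. }
  destruct (plug_var_inj cY _ _ _ _ (K_Y k0 Hk0) (HK' c k' u' Hc Hk') Ek) as [-> Ed].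
  rewrite depth_ccomp in Ed; simpl in Ed; lia.
Qed.

Lemma closure_root_e_det C k :
  (forall c, C c -> in_class k c) ->
  (forall c k' u', in_class k c -> K k' -> in_class cY (ccomp c (CESL k' u'))) ->
  deterministic (closure C (root_e K)).
Proof.
  intros HC HK.
  apply (closure_det (root_e K) root_e_det root_e_not_answer
           root_e_ES_not_answer_body) with (k := k); auto.
  - intros t u r' t' (k0 & u0 & _ & E & _); discriminate.
  - intros t u r' t'; apply root_e_body_no_step; auto.
Qed.

End RootE.

Lemma yeAY_det : deterministic yeAY.
Proof.
  apply (closure_root_e_det is_Y) with (k := cA).
  - apply is_Y_iff_in_class.
  - apply is_A_in_class.
  - intros c k u Hc Hk; apply in_class_ccomp_A; auto.
    constructor; apply is_Y_iff_in_class; auto.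
Qed.

Lemma yeYN_det : deterministic yeYN.
Proof.
  apply (closure_root_e_det is_N) with (k := cY).
  - intros c Hc; apply (in_class_Y cN), is_N_in_class; auto.
  - apply is_Y_iff_in_class.
  - intros c k u Hc Hk; apply in_class_ccomp_N; auto; [discriminate |].
    constructor; apply is_N_in_class; auto.
Qed.

(** * The diamond property of gcv *)

Lemma root_gcv_shift r r' d c : root_gcv r r' -> root_gcv (shift d c r) (shift d c r').
Proof.
  intros (t0 & s & v & Hs & Hv & -> & ->).
  exists (shift d c t0), (shiftc d c s), (shift d (c + depth s) v).
  repeat split; simpl.
  - apply is_S_shiftc; auto.
  - apply is_value_shift; auto.
  - rewrite shift_plug; f_equal.
    rewrite <- Nat.add_1_r; apply (shift_shift_comm t0 d 1 0 c); lia.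
  - rewrite shift_plug, depth_shiftc; f_equal.
    apply shift_shift_comm; lia.
Qed.

Lemma root_gcv_shift_inv a r' d c : root_gcv (shift d c a) r' ->
  exists b, r' = shift d c b /\ root_gcv a b.
Proof.
  intros (t0 & s & v & Hs & Hv & E & ->).
  destruct a; simpl in E; try destruct (Nat.leb c n); try discriminate.
  injection E; intros E2 E1.
  destruct (shift_eq_shift1 a1 t0 d c 0) as (a0 & -> & ->); [lia | auto |].
  destruct (shift_eq_plug_S s a2 v d c) as (s0 & v0 & Hs0 & Hv0 & -> & -> & ->); auto.
  exists (plug s0 (shift (depth s0) 0 a0)); split.
  - rewrite shift_plug, depth_shiftc; f_equal.
    symmetry; apply shift_shift_comm; lia.
  - exists a0, s0, v0; repeat split; auto.
Qed.

Lemma root_gcv_det r r1 r2 : root_gcv r r1 -> root_gcv r r2 -> r1 = r2.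
Proof.
  intros (t0 & s & v & Hs & Hv & -> & ->) (t0' & s' & v' & Hs' & Hv' & E & ->).
  injection E; intros E2 E1; apply shift_inj in E1; subst.
  destruct (plug_S_value_inj s s' v v') as [-> ->]; auto.
Qed.

Lemma step_gcv_shift k a b d c :
  step root_gcv k a b -> step root_gcv k (shift d c a) (shift d c b).
Proof.
  intros H; revert c; induction H; intros c; simpl.
  - apply step_root, root_gcv_shift; auto.
  - apply step_esl; auto.
  - apply step_esr; auto; apply is_answer_shift; auto.
  - apply step_appl; auto.
Qed.

Lemma step_gcv_shift_inv k a b' d c : step root_gcv k (shift d c a) b' ->
  exists b, b' = shift d c b /\ step root_gcv k a b.
Proof.
  intros H; remember (shift d c a) as x eqn:E; revert a c E.
  induction H as [k x r' Hr | k t t' u H IH | k a' t t' Hk Ha H IH | k t t' u Hk H IH];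
    intros a c E.
  - subst; destruct (root_gcv_shift_inv a r' d c Hr) as (b & -> & Hb).
    exists b; split; auto; apply step_root; auto.
  - destruct a; simpl in E; try destruct (Nat.leb c n); try discriminate.
    injection E; intros -> E1.
    destruct (IH a1 (S c) E1) as (b & -> & Hb).
    exists (ES b a2); split; auto; apply step_esl; auto.
  - destruct a; simpl in E; try destruct (Nat.leb c n); try discriminate.
    injection E; intros E2 ->.
    destruct (IH a2 c E2) as (b & -> & Hb).
    exists (ES a1 b); split; auto; apply step_esr; auto.
    eapply is_answer_shift; eauto.
  - destruct a; simpl in E; try destruct (Nat.leb c n); try discriminate.
    injection E; intros -> E1.
    destruct (IH a1 c E1) as (b & -> & Hb).
    exists (App b a2); split; auto; apply step_appl; auto.
Qed.

Lemma step_plug_S R k s x y : is_S s -> step R k x y -> step R k (plug s x) (plug s y).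
Proof. intros Hs; induction Hs; simpl; intros; auto; apply step_esl; auto. Qed.

Lemma step_gcv_answer k a a' : step root_gcv k a a' -> is_answer a -> is_answer a'.
Proof.
  intros H; induction H; intros Ha.
  - destruct H as (t0 & s & v & Hs & Hv & -> & ->); inversion Ha; subst.
    eapply is_answer_plug_S; eauto.
    apply is_answer_shift; eapply is_answer_shift; eauto.
  - inversion Ha; subst; constructor; auto.
  - inversion Ha; subst; constructor; auto.
  - inversion Ha.
Qed.

Lemma gcv_body_step_join k t u r t' :
  root_gcv (ES t u) r -> step root_gcv k t t' ->
  exists w, step root_gcv k r w /\ step root_gcv k (ES t' u) w.
Proof.
  intros (t0 & s & v & Hs & Hv & E & ->) Hst; injection E; intros; subst.
  destruct (step_gcv_shift_inv k t0 t' 1 0 Hst) as (t0' & -> & Ht0).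
  exists (plug s (shift (depth s) 0 t0')); split.
  - apply step_plug_S, step_gcv_shift; auto.
  - apply step_root; exists t0', s, v; repeat split; auto.
Qed.

(* The redex [S<v>[y\S'<v'>]] contracts to [S'<S<v>>], again a value under a
   substitution context. *)
Lemma root_gcv_ES_plug_S_value s v u w : is_S s -> is_value v ->
  root_gcv (ES (plug s v) u) w ->
  exists s2 v2, is_S s2 /\ is_value v2 /\ w = plug s2 v2 /\
    forall p, root_gcv (ES (plug s (shift (S (depth s)) 0 p)) u)
                       (plug s2 (shift (depth s2) 0 p)).
Proof.
  intros Hs Hv (q & s' & v' & Hs' & Hv' & E & ->).
  injection E; intros -> E1.
  destruct (shift_eq_plug_S s q v 1 0) as (s0 & v0 & Hs0 & Hv0 & -> & -> & ->); auto.
  exists (ccomp s' (shiftc (depth s') 0 s0)), (shift (depth s') (depth s0) v0).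
  repeat split.
  - apply is_S_ccomp, is_S_shiftc; auto.
  - apply is_value_shift; auto.
  - rewrite plug_ccomp, shift_plug; reflexivity.
  - intros p; exists (plug s0 (shift (depth s0) 0 p)), s', v'.
    repeat split; auto.
    + rewrite shift_plug, depth_shiftc, shift_shift by lia; reflexivity.
    + rewrite plug_ccomp, shift_plug, depth_ccomp, depth_shiftc, shift_shift by lia.
      reflexivity.
Qed.

Lemma step_gcv_plug_S_value k s v w : k <> cN -> is_S s -> is_value v ->
  step root_gcv k (plug s v) w ->
  exists s2 v2, is_S s2 /\ is_value v2 /\ w = plug s2 v2 /\
    forall p, is_answer p ->
      step root_gcv k (plug s (shift (depth s) 0 p)) (plug s2 (shift (depth s2) 0 p)).
Proof.
  intros Hk Hs; revert w; induction Hs as [| s u Hs IH]; intros w Hv H; simpl in H.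
  - destruct Hv as [b ->]; inversion H; subst.
    destruct H0 as (t0 & s & v & _ & _ & E & _); discriminate.
  - inversion H as [k' r w' Hr | k' t t' u' Ht | k' a t t' _ Ha Ht |]; subst.
    + destruct (root_gcv_ES_plug_S_value s v u w Hs Hv Hr)
        as (s2 & v2 & Hs2 & Hv2 & -> & Hp).
      exists s2, v2; repeat split; auto.
      intros p _; apply step_root, Hp.
    + destruct (IH t' Hv Ht) as (s2 & v2 & Hs2 & Hv2 & -> & Hp).
      exists (CESL s2 u), v2; repeat split; auto; [constructor; auto |].
      intros p Hpa; simpl; apply step_esl.
      specialize (Hp (shift 1 0 p) (proj2 (is_answer_shift p 1 0) Hpa)).
      rewrite !shift_shift, !Nat.add_1_r in Hp by lia; exact Hp.
    + exists (CESL s t'), v; repeat split; auto; [constructor; auto |].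
      intros p Hpa; simpl; apply step_esr; auto.
      eapply is_answer_plug_S; eauto; apply is_answer_shift; auto.
Qed.

Lemma gcv_arg_step_join k t u r u' : k <> cN -> is_answer t ->
  root_gcv (ES t u) r -> step root_gcv k u u' ->
  exists w, step root_gcv k r w /\ step root_gcv k (ES t u') w.
Proof.
  intros Hk Ht (t0 & s & v & Hs & Hv & E & ->) Hst; injection E; intros; subst.
  destruct (step_gcv_plug_S_value k s v u' Hk Hs Hv Hst)
    as (s2 & v2 & Hs2 & Hv2 & -> & Hp).
  exists (plug s2 (shift (depth s2) 0 t0)); split.
  - apply Hp; eapply is_answer_shift; eauto.
  - apply step_root; exists t0, s2, v2; repeat split; auto.
Qed.

Lemma step_gcv_diamond k t u1 u2 : step root_gcv k t u1 -> step root_gcv k t u2 ->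
  u1 = u2 \/ exists w, step root_gcv k u1 w /\ step root_gcv k u2 w.
Proof.
  intros H1; revert u2.
  induction H1 as [k r r1 Hr | k t t1 u H1 IH | k a t t1 Hk Ha H1 IH | k t t1 u Hk H1 IH];
    intros u2 H2; inversion H2; subst.
  - left; eapply root_gcv_det; eauto.
  - right; eapply gcv_body_step_join; eauto.
  - right; eapply gcv_arg_step_join; eauto.
  - match goal with Hr : root_gcv (App _ _) _ |- _ =>
      destruct Hr as (? & ? & ? & _ & _ & E & _); discriminate end.
  - destruct (gcv_body_step_join k t u u2 t1) as (w & Hw1 & Hw2); eauto.
  - destruct (IH t' ltac:(assumption)) as [-> | (w & Hw1 & Hw2)]; auto.
    right; exists (ES w u); split; apply step_esl; auto.
  - right; exists (ES t1 t'); split.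
    + apply step_esr; auto; eapply step_gcv_answer; eauto.
    + apply step_esl; auto.
  - destruct (gcv_arg_step_join k a t u2 t1) as (w & Hw1 & Hw2); eauto.
  - right; exists (ES t' t1); split.
    + apply step_esl; auto.
    + apply step_esr; auto; eapply step_gcv_answer; eauto.
  - destruct (IH t' ltac:(assumption)) as [-> | (w & Hw1 & Hw2)]; auto.
    right; exists (ES a w); split; apply step_esr; auto.
  - match goal with Hr : root_gcv (App _ _) _ |- _ =>
      destruct Hr as (? & ? & ? & _ & _ & E & _); discriminate end.
  - destruct (IH t' ltac:(assumption)) as [-> | (w & Hw1 & Hw2)]; auto.
    right; exists (App w u); split; apply step_appl; auto.
Qed.

Lemma ygcv_diamond : diamond ygcv.
Proof.
  intros t u1 u2 H1 H2.
  destruct (step_gcv_diamond cY t u1 u2) as [-> | (w & Hw1 & Hw2)];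
    try (apply (closure_step is_Y); [apply is_Y_iff_in_class | assumption]); auto.
  right; exists w; split; apply (step_closure is_Y root_gcv cY); auto; apply is_Y_iff_in_class.
Qed.

Theorem proposition11p4 :
  deterministic ym /\ deterministic yeAY /\ deterministic yeYN /\ diamond ygcv.
Proof.
  split; [apply ym_det |].
  split; [apply yeAY_det |].
  split; [apply yeYN_det | apply ygcv_diamond].
Qed.
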